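(* Let $\ell\ge1$ be an integer and $x$ a real number with $x\ge16\ell^{3/2}$. Then $$\sum_{\substack{\sigma\in S_\ell\\ \sigma\text{ has no fixed points}}}x^{|\mathsf{cyc}(\sigma)|}\le e^{\ell^{3/4}}\,\ell!!\,x^{\ell/2}.$$ Consequently also $\sum_{\pi}x^{|\pi|}\le e^{\ell^{3/4}}\,\ell!!\,x^{\ell/2}$, the sum over partitions $\pi$ of $\{1,\dots,\ell\}$ all of whose blocks have size at least $2$.
   Context: $S_\ell$ is the symmetric group on $\{1,\dots,\ell\}$ and $\mathsf{cyc}(\sigma)$ is its set of cycles; $|\pi|$ is the number of blocks of a partition. $n!!=n(n-2)(n-4)\cdots$ (ending at 1 or 2), with $0!!=1$. *)

From HB Require Import structures.
From mathcomp Require Import all_boot all_order all_algebra all_fingroup.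
From mathcomp Require Import all_classical all_reals all_analysis.
Set Implicit Arguments. Unset Strict Implicit. Unset Printing Implicit Defensive.
Import Order.TTheory GRing.Theory Num.Theory.

Fixpoint dfact (n : nat) : nat :=
  match n with
  | 0 => 1
  | 1 => 1
  | (m.+2) as k => k * dfact m
  end.

Definition partition_ge2 (l : nat) (P : {set {set 'I_l}}) : bool :=
  finset.partition P [set: 'I_l] && [forall B in P, 1 < #|B|]%N.

From HB Require Import structures.
From mathcomp Require Import all_boot all_order all_algebra all_fingroup.
From mathcomp Require Import all_classical all_reals all_analysis.
(* Re-imported so that [set0], [subsetP], [pblock], ... denote finite sets. *)
From mathcomp Require Import fintype finset.
From mathcomp Require Import zify ring lra.
Set Implicit Arguments. Unset Strict Implicit. Unset Printing Implicit Defensive.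
Import Order.TTheory GRing.Theory Num.Theory.
Local Open Scope ring_scope.

(* Put [d := l^(-1/4)] and [h n := n!! ((1 + d) sqrt x)^n].  Removing a point
   [a] of [A] bounds both sums by [\sum_(j in A :\ a) (S (A :\ a) + x S (A :\ a :\ j))]
   (derangement sums normalised by the fixed points outside [A]).  For a
   derangement, [j] is the image of [a], and composing with the transposition
   [(a j)] creates one more cycle; for a partition, [j] is the partner of [a]
   when its block is a pair, otherwise [a] is simply deleted from its block, a
   choice made in at most [#|A| - 1] ways.  By induction both sums are then at
   most [h #|A|] as soon as [(n - 1) (h (n - 1) + x h (n - 2)) <= h n], and this
   follows from [n!!^2 (n + 2) <= 2 (n + 1)!!^2] once [2 n <= x d^2],
   which is what [x >= 16 l^(3/2)] ensures.  Finally
   [(1 + d)^l <= e^(l d) = e^(l^(3/4))]. *)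

Section SumMonotonicity.
Variable R : numDomainType.

Lemma ler_sum_subset (I : finType) (P Q : pred I) (F : I -> R) :
  (forall i, P i -> Q i) -> (forall i, Q i -> 0 <= F i) ->
  \sum_(i | P i) F i <= \sum_(i | Q i) F i.
Proof.
move=> PQ F_ge0; rewrite [X in _ <= X](bigID P) /=.
rewrite (eq_bigl P) => [|i]; last by case Pi: (P i); rewrite ?andbT ?andbF ?PQ.
by rewrite lerDl sumr_ge0 // => i /andP[/F_ge0].
Qed.

Lemma ler_sum_inj (I J : finType) (P : pred I) (Q : pred J) (f : I -> J) (G : J -> R) :
  {in P &, injective f} -> (forall i, P i -> Q (f i)) ->
  (forall j, Q j -> 0 <= G j) ->
  \sum_(i | P i) G (f i) <= \sum_(j | Q j) G j.
Proof.
move=> f_inj PQ G_ge0; rewrite -[X in X <= _]/(\sum_(i in P) G (f i)).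
rewrite -(big_imset _ f_inj); apply: ler_sum_subset => // j /imsetP[i Pi ->].
exact: PQ.
Qed.

End SumMonotonicity.

Section RecursiveMajorant.
Variables (R : numDomainType) (T : finType) (x : R) (h : nat -> R).
Hypothesis x_ge0 : 0 <= x.
Hypothesis h_rec : forall n, (0 < n <= #|T|)%N ->
  n.-1%:R * (h n.-1 + x * h n.-2) <= h n.

Lemma le_majorant (F : {set T} -> R) : F set0 <= h 0 ->
  (forall (A : {set T}) a, a \in A ->
     F A <= \sum_(j in A :\ a) (F (A :\ a) + x * F (A :\ a :\ j))) ->
  forall A, F A <= h #|A|.
Proof.
move=> F0 F_rec A; elim: {A}#|A| {-2}A (leqnn #|A|) => [|n IHn] A.
  by rewrite leqn0 => /eqP/cards0_eq ->; rewrite cards0.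
have [->|[a aA]] := set_0Vmem A; first by rewrite cards0.
move=> leAn.
have cardA1 : #|A :\ a| = #|A|.-1 by rewrite (cardsD1 a A) aA.
have cardA : (0 < #|A| <= #|T|)%N by rewrite max_card (cardsD1 a A) aA.
apply: le_trans (F_rec A a aA) (le_trans _ (h_rec cardA)).
rewrite mulr_natl -cardA1 -sumr_const; apply: ler_sum => j jA.
have cardA2 : #|A :\ a :\ j| = #|A :\ a|.-1 by rewrite (cardsD1 j (A :\ a)) jA.
rewrite -cardA2 lerD ?ler_wpM2l ?IHn //; lia.
Qed.

End RecursiveMajorant.

Section Derangements.
Variables (R : numFieldType) (T : finType) (x : R).
Hypothesis x_gt0 : 0 < x.

Definition derangement_on (A : {set T}) (s : {perm T}) :=
  perm_on A s && [forall i in A, s i != i].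

Definition derangement_sum (A : {set T}) :=
  \sum_(s | derangement_on A s) x ^+ #|porbits s|.

Lemma derangement_onT (s : {perm T}) :
  derangement_on [set: T] s = [forall i, s i != i].
Proof.
rewrite /derangement_on; have -> : perm_on [set: T] s.
  by apply/subsetP => i; rewrite in_setT.
apply/forall_inP/forallP => [s_der i | s_der i _]; last exact: s_der.
exact: s_der (in_setT i).
Qed.

Lemma card_porbits1 : #|porbits (1 : {perm T})| = #|T|.
Proof.
rewrite /porbits card_imset // => y z /eqP; rewrite eq_porbit_mem.
by rewrite porbit.unlock cycle1 imset_set1 /aperm perm1 inE => /eqP.
Qed.

Lemma derangement_sum0 : derangement_sum set0 = x ^+ #|T|.
Proof.
rewrite /derangement_sum (big_pred1 1%g) ?card_porbits1 // => s.
apply/andP/eqP => [[s_on _]|->]; first by apply: perm_on_id s_on _; rewrite cards0.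
by split; [exact: perm_on1 | apply/forall_inP => i; rewrite inE].
Qed.

Lemma card_porbits_mul_tperm (s : {perm T}) a : s a != a ->
  #|porbits (s * tperm a (s a))%g| = #|porbits s|.+1.
Proof.
move=> sa_neq_a; have := porbits_mul_tperm s^-1 a (s a).
have -> : a \in porbit s^-1 (s a).
  by rewrite porbitV porbit_sym; have := mem_porbit s 1 a; rewrite expg1.
rewrite /= addn0 eq_sym sa_neq_a addn1 => card_porbits.
have -> : (s * tperm a (s a) = (tperm a (s a) * s^-1)^-1)%g.
  by rewrite invMg invgK tpermV.
by rewrite porbitsV card_porbits porbitsV.
Qed.

Lemma derangement_mul_tperm (A : {set T}) a (s : {perm T}) :
  a \in A -> derangement_on A s ->
  perm_on (A :\ a) (s * tperm a (s a))%g &&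
  [forall i in A :\ a :\ s a, (s * tperm a (s a))%g i != i].
Proof.
move=> aA /andP[s_on /forall_inP s_der]; apply/andP; split.
  apply/subsetP => i; rewrite inE permM => ui.
  have i_neq_a : i != a by apply: contraNneq ui => ->; rewrite tpermR.
  rewrite !inE i_neq_a /=; apply: contraR ui => iA.
  rewrite (out_perm s_on iA) tpermD // 1?eq_sym //.
  by apply: contraNneq iA => ->; rewrite perm_closed.
apply/forall_inP => i; rewrite !inE permM => /and3P[i_neq_sa i_neq_a iA].
case: tpermP => [_|sisa|_ _]; last exact: s_der.
- by rewrite eq_sym.
- by rewrite (perm_inj sisa) eqxx in i_neq_a.
Qed.

Lemma derangement_sum_step (A : {set T}) a j : a \in A ->
  x * \sum_(s | derangement_on A s && (s a == j)) x ^+ #|porbits s| <=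
  derangement_sum (A :\ a) + derangement_sum (A :\ a :\ j).
Proof.
move=> aA; rewrite mulr_sumr.
rewrite (eq_bigr (fun s => x ^+ #|porbits (s * tperm a j)%g|)); last first.
  move=> s /andP[/andP[_ /forall_inP s_der] /eqP <-].
  by rewrite card_porbits_mul_tperm ?exprS ?s_der.
pose Q u := perm_on (A :\ a) u && [forall i in A :\ a :\ j, u i != i].
apply: le_trans (ler_sum_inj (Q := Q) (f := fun s => (s * tperm a j)%g)
  (G := fun u => x ^+ #|porbits u|) _ _ _) _.
- by move=> s1 s2 _ _ /mulIg.
- move=> s /andP[s_der /eqP sa].
  by rewrite /Q -sa; exact: derangement_mul_tperm.
- by move=> u _; rewrite exprn_ge0 ?ltW.
rewrite (bigID (fun u : {perm T} => u j == j)) /= addrC.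
apply: lerD; apply: ler_sum_subset => [u|u _]; rewrite ?exprn_ge0 ?ltW //.
- case/andP=> /andP[u_on /forall_inP u_der] uj; apply/andP; split => //.
  apply/forall_inP => i iA; case: (eqVneq i j) => [->//|ij].
  by apply: u_der; rewrite in_setD1 ij.
- case/andP=> /andP[u_on u_der] /eqP uj; apply/andP; split => //.
  apply/subsetP => i ui; rewrite in_setD1 (subsetP u_on i ui).
  by rewrite andbT; apply: contraNneq ui => ->; rewrite uj.
Qed.

Lemma derangement_sum_rec (A : {set T}) a : a \in A ->
  x * derangement_sum A <=
  \sum_(j in A :\ a) (derangement_sum (A :\ a) + derangement_sum (A :\ a :\ j)).
Proof.
move=> aA; rewrite {1}/derangement_sum.
rewrite (partition_big (fun s : {perm T} => s a) (mem (A :\ a))) /=; last first.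
  move=> s /andP[s_on /forall_inP s_der].
  by rewrite in_setD1 perm_closed // aA andbT s_der.
by rewrite mulr_sumr; apply: ler_sum => j _; exact: derangement_sum_step.
Qed.

(* Dividing by [x ^+ (#|T| - #|A|)] discounts the fixed points outside [A]. *)
Lemma derangement_sum_le (h : nat -> R) : 1 <= h 0 ->
  (forall n, (0 < n <= #|T|)%N -> n.-1%:R * (h n.-1 + x * h n.-2) <= h n) ->
  forall A, derangement_sum A <= x ^+ (#|T| - #|A|) * h #|A|.
Proof.
move=> h0 h_rec A; rewrite mulrC -ler_pdivrMr ?exprn_gt0 //.
have x_neq0 : x != 0 by rewrite gt_eqF.
pose F B := derangement_sum B / x ^+ (#|T| - #|B|).
apply: (le_majorant (ltW x_gt0) h_rec (F := F)) => [|B a aB].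
  by rewrite /F derangement_sum0 cards0 subn0 divff // expf_neq0.
set k := (#|T| - #|B|)%N.
have cardB : (#|T| - #|B :\ a| = k.+1)%N.
  by move: (max_card B) (cardsD1 a B); rewrite aB /k; lia.
have -> : F B = x * derangement_sum B / x ^+ k.+1.
  by rewrite /F exprS; field; rewrite expf_neq0.
apply: le_trans (ler_wpM2r _ (derangement_sum_rec aB)) _.
  by rewrite invr_ge0 exprn_ge0 ?ltW.
rewrite mulr_suml; apply: ler_sum => j jB.
have cardBj : (#|T| - #|B :\ a :\ j| = k.+2)%N.
  by move: (cardsD1 j (B :\ a)); rewrite jB; lia.
rewrite /F cardB cardBj mulrDl.
suff -> : x * (derangement_sum (B :\ a :\ j) / x ^+ k.+2) =
          derangement_sum (B :\ a :\ j) / x ^+ k.+1 by [].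
by rewrite [x ^+ k.+2]exprS; field; rewrite expf_neq0.
Qed.

End Derangements.

Section NoSingletonPartitions.
Variable T : finType.

Definition nosingleton_partition (P : {set {set T}}) (A : {set T}) :=
  partition P A && [forall B in P, 1 < #|B|]%N.

Lemma card_nosingleton_partition P A :
  nosingleton_partition P A -> (#|P| <= #|A|)%N.
Proof.
case/andP => P_part /forall_inP P_big; rewrite (card_partition P_part).
by rewrite -sum1_card; apply: leq_sum => B /P_big; lia.
Qed.

Lemma nosingleton_pblock P A a : nosingleton_partition P A -> a \in A ->
  [/\ pblock P a \in P, a \in pblock P a, pblock P a \subset A
    & (1 < #|pblock P a|)%N].
Proof.
case/andP => P_part /forall_inP P_big aA.
have aP : a \in cover P by rewrite (cover_partition P_part).
have BP := pblock_mem aP.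
by split => //; [rewrite mem_pblock | exact: partitionS P_part BP | exact: P_big].
Qed.

Definition pblock_partner (P : {set {set T}}) a :=
  odflt a [pick j in pblock P a :\ a].

Lemma nosingleton_partition_pair P A a :
  nosingleton_partition P A -> a \in A -> #|pblock P a| = 2 ->
  let j := pblock_partner P a in
  [/\ pblock P a = [set a; j], j \in A :\ a,
      nosingleton_partition (P :\ pblock P a) (A :\ a :\ j)
    & #|P| = #|P :\ pblock P a|.+1].
Proof.
move=> P_ns aA card2; have [BP aB BA _] := nosingleton_pblock P_ns aA.
set B := pblock P a in BP aB BA card2 *.
have /cards1P[j Ba] : #|B :\ a| == 1 by move: (cardsD1 a B); rewrite aB card2; lia.
have -> : pblock_partner P a = j.
  rewrite /pblock_partner -/B Ba; case: pickP => [k|]; first by rewrite inE => /eqP.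
  by move/(_ j); rewrite inE eqxx.
have B_pair : B = [set a; j] by rewrite -(setD1K aB) Ba.
have /andP[j_neq_a jB] : (j != a) && (j \in B) by rewrite -in_setD1 Ba set11.
split => //.
- by rewrite in_setD1 j_neq_a (subsetP BA).
- case/andP: P_ns => P_part /forall_inP P_big; apply/andP; split.
    by rewrite setDDl -B_pair; exact: partitionD1.
  by apply/forall_inP => C; rewrite in_setD1 => /andP[_ /P_big].
- by rewrite (cardsD1 B P) BP.
Qed.

Lemma nosingleton_partition_shrink P A a :
  nosingleton_partition P A -> a \in A -> #|pblock P a| != 2 ->
  let C := pblock P a :\ a in let Q := C |: (P :\ pblock P a) in
  [/\ nosingleton_partition Q (A :\ a), #|Q| = #|P| & P = (a |: C) |: (Q :\ C)].
Proof.
move=> P_ns aA card_neq2 C Q; have [BP aB BA card_gt1] := nosingleton_pblock P_ns aA.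
case/andP: P_ns => P_part /forall_inP P_big.
rewrite {}/Q; set B := pblock P a in BP aB BA card_gt1 card_neq2 C *.
have card_C : (1 < #|C|)%N by move: (cardsD1 a B); rewrite aB /C; lia.
have CB : C \subset B by apply: subD1set.
have C_notin : C \notin P :\ B.
  rewrite in_setD1 negb_and negbK; apply/orP.
  have [CP|] := boolP (C \in P); last by right.
  left; have [z zC] : exists z, z \in C by apply/card_gt0P; lia.
  have P_triv := partition_trivIset P_part.
  by rewrite -(def_pblock P_triv CP zC) (def_pblock P_triv BP (subsetP CB z zC)).
split.
- apply/andP; split.
    have -> : A :\ a = C :|: (A :\: B).
      apply/setP => z; rewrite !inE; case: (boolP (z \in B)) => zB /=.
        by rewrite (subsetP BA z zB) andbT orbF.
      by rewrite (_ : z != a) //; apply: contraNneq zB => ->.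
    apply: partitionU1 => //; first exact: partitionD1.
      by rewrite -card_gt0; lia.
    rewrite -setI_eq0; apply/eqP/setP => z; rewrite !inE.
    by case: (z \in B); rewrite ?andbF.
  apply/forall_inP => D; rewrite in_setU1 => /orP[/eqP ->//|].
  by rewrite in_setD1 => /andP[_ /P_big].
- by rewrite cardsU1 C_notin (cardsD1 B P) BP.
- by rewrite setU1K // setD1K // setD1K.
Qed.

Variables (R : numDomainType) (x : R).
Hypothesis x_ge0 : 0 <= x.

Definition partition_sum (A : {set T}) :=
  \sum_(P | nosingleton_partition P A) x ^+ #|P|.

Lemma partition_sum0 : partition_sum set0 = 1.
Proof.
rewrite /partition_sum (big_pred1 set0) ?cards0 ?expr0 // => P.
rewrite /nosingleton_partition partition_set0.
apply/andP/eqP => [[/eqP -> _]|->] //.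
by split => //; apply/forall_inP => B; rewrite inE.
Qed.

Lemma partition_sum_pair (A : {set T}) a : a \in A ->
  \sum_(P | nosingleton_partition P A && (#|pblock P a| == 2)) x ^+ #|P| <=
  \sum_(j in A :\ a) x * partition_sum (A :\ a :\ j).
Proof.
move=> aA.
rewrite (eq_bigr (fun P => x * x ^+ #|P :\ pblock P a|)); last first.
  move=> P /andP[P_ns /eqP card2].
  by have [_ _ _ ->] := nosingleton_partition_pair P_ns aA card2; rewrite exprS.
under [X in _ <= X]eq_bigr do rewrite /partition_sum mulr_sumr.
rewrite pair_big_dep /=.
apply: (ler_sum_inj
  (Q := fun p => (p.1 \in A :\ a) && nosingleton_partition p.2 (A :\ a :\ p.1))
  (f := fun P => (pblock_partner P a, P :\ pblock P a))
  (G := fun p => x * x ^+ #|p.2|)).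
- move=> P1 P2 /andP[P1_ns /eqP card1] /andP[P2_ns /eqP card2] [e1 e2].
  have [B1P _ _ _] := nosingleton_pblock P1_ns aA.
  have [B2P _ _ _] := nosingleton_pblock P2_ns aA.
  have [B1 _ _ _] := nosingleton_partition_pair P1_ns aA card1.
  have [B2 _ _ _] := nosingleton_partition_pair P2_ns aA card2.
  by rewrite -(setD1K B1P) -(setD1K B2P) e2 B1 B2 e1.
- move=> P /andP[P_ns /eqP card2].
  by have [_ jA P'_ns _] := nosingleton_partition_pair P_ns aA card2; rewrite jA.
- by move=> p _; rewrite mulr_ge0 // exprn_ge0.
Qed.

Lemma partition_sum_shrink (A : {set T}) a : a \in A ->
  \sum_(P | nosingleton_partition P A && (#|pblock P a| != 2)) x ^+ #|P| <=
  \sum_(Q | nosingleton_partition Q (A :\ a)) x ^+ #|Q| *+ #|Q|.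
Proof.
move=> aA.
rewrite (eq_bigr (fun P => x ^+ #|(pblock P a :\ a) |: (P :\ pblock P a)|));
  last by move=> P /andP[P_ns card2];
          have [_ -> _] := nosingleton_partition_shrink P_ns aA card2.
under [X in _ <= X]eq_bigr do rewrite -sumr_const.
rewrite pair_big_dep /=.
apply: (ler_sum_inj (Q := fun p => nosingleton_partition p.1 (A :\ a) && (p.2 \in p.1))
  (f := fun P => ((pblock P a :\ a) |: (P :\ pblock P a), pblock P a :\ a))
  (G := fun p => x ^+ #|p.1|)).
- move=> P1 P2 /andP[P1_ns card1] /andP[P2_ns card2] [e1 e2].
  have [_ _ ->] := nosingleton_partition_shrink P1_ns aA card1.
  by have [_ _ ->] := nosingleton_partition_shrink P2_ns aA card2; rewrite e1 e2.
- move=> P /andP[P_ns card2].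
  by have [Q_ns _ _] := nosingleton_partition_shrink P_ns aA card2; rewrite Q_ns setU11.
- by move=> p _; rewrite exprn_ge0.
Qed.

Lemma partition_sum_rec (A : {set T}) a : a \in A ->
  partition_sum A <=
  \sum_(j in A :\ a) (partition_sum (A :\ a) + x * partition_sum (A :\ a :\ j)).
Proof.
move=> aA; rewrite {1}/partition_sum (bigID (fun P => #|pblock P a| == 2)) /=.
rewrite big_split /= addrC lerD ?partition_sum_pair //.
apply: le_trans (partition_sum_shrink aA) _.
rewrite sumr_const -mulr_natl /partition_sum mulr_sumr; apply: ler_sum => Q Q_ns.
by rewrite -mulr_natl ler_wpM2r ?exprn_ge0 // ler_nat card_nosingleton_partition.
Qed.

Lemma partition_sum_le (h : nat -> R) : 1 <= h 0 ->
  (forall n, (0 < n <= #|T|)%N -> n.-1%:R * (h n.-1 + x * h n.-2) <= h n) ->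
  forall A, partition_sum A <= h #|A|.
Proof.
move=> h0 h_rec; apply: le_majorant x_ge0 h_rec _ _ _ => [|A a aA].
  by rewrite partition_sum0.
exact: partition_sum_rec.
Qed.

End NoSingletonPartitions.

Lemma dfactSS n : dfact n.+2 = (n.+2 * dfact n)%N.
Proof. by []. Qed.

Lemma dfact_sqrS (n : nat) : (dfact n ^ 2 * n.+2 <= 2 * dfact n.+1 ^ 2)%N.
Proof.
elim: n {-2}n (leqnn n) => [|k IHk] [|[|m]] // le_mk.
rewrite !dfactSS; have := IHk m ltac:(lia); nia.
Qed.

Section DfactMajorant.
Variable R : realFieldType.

Lemma dfact_succ_le (c : R) m : 0 <= c -> 2 * m.+2%:R <= c ^+ 2 ->
  m.+1%:R * (dfact m.+1)%:R <= m.+2%:R * (dfact m)%:R * c.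
Proof.
move=> c_ge0 le_c.
have := dfact_sqrS m.+1; rewrite dfactSS -(ler_nat R) !natrM.
set D := (dfact m)%:R; set E := (dfact m.+1)%:R => le_E.
have D_ge0 : 0 <= D by [].
have E_ge0 : 0 <= E by [].
rewrite -ler_sqr ?nnegrE ?mulr_ge0 //.
rewrite -[m.+3]addn3 -[m.+2]addn2 -[m.+1]addn1 !natrD in le_c le_E *.
set M := (m%:R : R) in le_c le_E *.
have M_ge0 : 0 <= M by [].
set u := (M + 2) * D * ((M + 2) * D).
have u_ge0 : 0 <= u by rewrite mulr_ge0 // mulr_ge0 //; lra.
have le_M : 2 * (M + 1) ^+ 2 <= (M + 3) * c ^+ 2 by nra.
have := ler_wpM2r u_ge0 le_M.
have := ler_wpM2l (_ : 0 <= (M + 1) ^+ 2) le_E.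
rewrite -(ler_pM2l (_ : 0 < M + 3)); last by lra.
nra.
Qed.

Definition dfact_majorant (d y : R) (n : nat) := (dfact n)%:R * ((1 + d) * y) ^+ n.

Lemma dfact_majorant_ge0 (d y : R) n :
  0 <= d -> 0 <= y -> 0 <= dfact_majorant d y n.
Proof. by move=> d_ge0 y_ge0; rewrite mulr_ge0 // exprn_ge0 // mulr_ge0 //; lra. Qed.

Lemma dfact_majorant_rec (d y : R) n : 0 <= d -> 0 <= y -> (0 < n)%N ->
  2 * n%:R <= (y * d) ^+ 2 ->
  n.-1%:R * (dfact_majorant d y n.-1 + y ^+ 2 * dfact_majorant d y n.-2)
    <= dfact_majorant d y n.
Proof.
move=> d_ge0 y_ge0; case: n => [//|[_ _|m _ le_yd]].
  by rewrite mul0r dfact_majorant_ge0.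
have := dfact_succ_le (mulr_ge0 y_ge0 d_ge0) le_yd.
rewrite /dfact_majorant dfactSS natrM.
set D := (dfact m)%:R; set E := (dfact m.+1)%:R; set z := (1 + d) * y => le_E.
have z_ge0 : 0 <= z by rewrite mulr_ge0 //; lra.
have D_ge0 : 0 <= D by [].
rewrite -[m.+2.-1]/m.+1 -[m.+2.-2]/m !exprS.
suff le_z : m.+1%:R * (E * z + y ^+ 2 * D) <= m.+2%:R * D * (z * z).
  have := ler_wpM2r (exprn_ge0 m z_ge0) le_z; rewrite !mulrDl; lra.
have le_Ez := ler_wpM2r z_ge0 le_E.
have le_Dy : m.+1%:R * (y ^+ 2 * D) <= m.+2%:R * D * (y * z).
  have le_yz : y ^+ 2 <= y * z by rewrite /z; nra.
  have le_m : m.+1%:R <= m.+2%:R :> R by rewrite ler_nat.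
  have := ler_pM (ler0n _ _) (mulr_ge0 (exprn_ge0 2 y_ge0) D_ge0) le_m
    (ler_wpM2r D_ge0 le_yz).
  lra.
have -> : z * z = y * d * z + y * z by rewrite /z; ring.
lra.
Qed.

End DfactMajorant.

Section PowerBounds.
Variable R : realType.

Lemma exprn_powR (a r : R) n : 0 <= a -> (a `^ r) ^+ n = a `^ (r * n%:R).
Proof. by move=> a_ge0; rewrite -powR_mulrn ?powR_ge0 // -powRrM. Qed.

Lemma exprn_sqrt (a : R) n : 0 <= a -> Num.sqrt a ^+ n = a `^ (n%:R / 2).
Proof. by move=> a_ge0; rewrite -powR12_sqrt // exprn_powR // mulrC. Qed.

Lemma exprn_1D_le_expR (d : R) n : -1 <= d -> (1 + d) ^+ n <= expR (n%:R * d).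
Proof.
move=> d_ge; rewrite expRM_natl lerXn2r ?nnegrE ?expR_ge0 ?expR_ge1Dx //; lra.
Qed.

Lemma powR_sub_quarter (L : R) : 0 < L -> L * L `^ (- 4^-1) = L `^ (3 / 4).
Proof.
move=> L_gt0; rewrite -{1}(powRr1 (ltW L_gt0)) -powRD.
  by congr powR; lra.
by rewrite (gt_eqF L_gt0) implybT.
Qed.

Lemma dfact_majorant_le (l : nat) (x : R) : (0 < l)%N -> 0 <= x ->
  dfact_majorant (l%:R `^ (- 4^-1)) (Num.sqrt x) l <=
  expR (l%:R `^ (3 / 4)) * (dfact l)%:R * x `^ (l%:R / 2).
Proof.
move=> l_gt0 x_ge0; rewrite /dfact_majorant exprMn exprn_sqrt // mulrA.
rewrite [_ * (1 + _) ^+ l]mulrC ler_wpM2r ?powR_ge0 // ler_wpM2r //.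
rewrite -powR_sub_quarter ?ltr0n // exprn_1D_le_expR //.
by have := powR_ge0 (l%:R : R) (- 4^-1); lra.
Qed.

Lemma sqrt_scale_ge (l n : nat) (x : R) : (0 < l)%N -> (n <= l)%N ->
  16 * l%:R `^ (3 / 2) <= x ->
  2 * n%:R <= (Num.sqrt x * l%:R `^ (- 4^-1)) ^+ 2.
Proof.
move=> l_gt0 n_le_l le_x; set L : R := l%:R.
have L_gt0 : 0 < L by rewrite ltr0n.
have x_ge0 : 0 <= x by apply: le_trans le_x; rewrite mulr_ge0 ?powR_ge0.
have split_L : 16 * L = 16 * L `^ (3 / 2) * L `^ (- 4^-1 * 2%:R).
  rewrite -mulrA -powRD ?(gt_eqF L_gt0) ?implybT //.
  by rewrite (_ : 3 / 2 + _ = 1) ?powRr1 ?(ltW L_gt0) //; lra.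
have le_n : 2 * n%:R <= 16 * L.
  have : n%:R <= L by rewrite ler_nat.
  lra.
rewrite exprMn sqr_sqrtr // exprn_powR ?(ltW L_gt0) //.
by apply: le_trans le_n _; rewrite split_L ler_wpM2r ?powR_ge0.
Qed.

End PowerBounds.

Theorem propositionD6 (R : realType) (l : nat) (x : R) :
  (1 <= l)%N ->
  16 * (l%:R `^ (3 / 2)) <= x ->
  (\sum_(s : 'S_l | [forall i, s i != i]) x ^+ #|porbits s|
     <= expR (l%:R `^ (3 / 4)) * (dfact l)%:R * x `^ (l%:R / 2))
  /\
  (\sum_(P : {set {set 'I_l}} | partition_ge2 P) x ^+ #|P|
     <= expR (l%:R `^ (3 / 4)) * (dfact l)%:R * x `^ (l%:R / 2)).
Proof.
move=> l_gt0 le_x; pose d : R := l%:R `^ (- 4^-1); pose y := Num.sqrt x.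
have x_gt0 : 0 < x by apply: lt_le_trans le_x; rewrite mulr_gt0 ?powR_gt0 ?ltr0n.
have h0 : 1 <= dfact_majorant d y 0 by rewrite /dfact_majorant expr0 mulr1.
have h_rec n : (0 < n <= #|'I_l|)%N ->
    n.-1%:R * (dfact_majorant d y n.-1 + x * dfact_majorant d y n.-2)
      <= dfact_majorant d y n.
  rewrite card_ord => /andP[n_gt0 n_le_l]; rewrite -(sqr_sqrtr (ltW x_gt0)).
  by apply: dfact_majorant_rec; rewrite ?powR_ge0 ?sqrtr_ge0 ?sqrt_scale_ge.
have bound := dfact_majorant_le l_gt0 (ltW x_gt0).
split.
- rewrite -(eq_bigl _ _ (@derangement_onT _)).
  apply: le_trans (derangement_sum_le x_gt0 h0 h_rec _) _.
  by rewrite cardsT card_ord subnn expr0 mul1r; exact: bound.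
- apply: le_trans (partition_sum_le (ltW x_gt0) h0 h_rec _) _.
  by rewrite cardsT card_ord; exact: bound.
Qed.
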